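(* For all $n\ge k\ge3$, $$\mathbf{Sf}_{n,k}(p,1)\big|_{p^1}=\binom{k-1}{2}\binom{n-1}{k}.$$
   Context: $F_1(p,q)=q$, $F_2(p,q)=q^2$ and $F_m(p,q)=qF_{m-1}(p,q)+pF_{m-2}(p,q)$ for $m\ge3$. Let $(x)_{\downarrow_{F,p,q,0}}=1$ and $(x)_{\downarrow_{F,p,q,k}}=x(x-F_1(p,q))\cdots(x-F_{k-1}(p,q))$ for $k\ge1$. Define the polynomials $\mathbf{Sf}_{n,k}(p,q)$ for $0\le k\le n$ by $x^n=\sum_{k=0}^n\mathbf{Sf}_{n,k}(p,q)(x)_{\downarrow_{F,p,q,k}}$. $\mathbf{Sf}_{n,k}(p,1)$ is the specialization $q=1$, and $f|_{p^s}$ denotes the coefficient of $p^s$ in the polynomial $f$ in $p$. *)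

From HB Require Import structures.
From mathcomp Require Import all_boot all_order all_algebra.
Set Implicit Arguments. Unset Strict Implicit. Unset Printing Implicit Defensive.
Import GRing.Theory.
Local Open Scope ring_scope.

(* Polynomials in p, q with integer coefficients are represented as
   {poly {poly int}}: the outer variable is q, the inner variable is p. *)
Definition PQ := {poly {poly int}}.
Definition pvar : PQ := ('X : {poly int})%:P.
Definition qvar : PQ := 'X.

(* Pair (F_m, F_{m+1}); F_0 := 0 (so F_2 = q F_1 + p F_0 = q^2), F_1 = q. *)
Fixpoint Fpair (m : nat) : PQ * PQ :=
  match m with
  | 0 => (0, qvar)
  | m'.+1 => let: (a, b) := Fpair m' in (b, qvar * b + pvar * a)
  end.
Definition Fib (m : nat) : PQ := (Fpair m).1.

Definition ffall (k : nat) : {poly PQ} := \prod_(i < k) ('X - (Fib i)%:P).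

(** Expanding [x * x^n] in the basis [(x)_k] and using [x (x)_k = (x)_(k+1) + F_k (x)_k]
    gives the triangular recurrence [Sf_(n+1,k) = Sf_(n,k-1) + F_k Sf_(n,k)].  At [q = 1]
    one has [F_k = 1 + (k-2) p + O(p^2)] for [k >= 1], so the coefficients of [p^0] and
    [p^1] obey Pascal-like recurrences, solved by [binom(n-1,k-1)] and
    [binom(k-1,2) binom(n-1,k)] respectively. *)

From HB Require Import structures.
From mathcomp Require Import all_boot all_order all_algebra.
From mathcomp Require Import ring.
Set Implicit Arguments. Unset Strict Implicit. Unset Printing Implicit Defensive.
Import GRing.Theory.
Local Open Scope ring_scope.

Section TriangularBasis.
Variables (R : nzRingType) (P : nat -> {poly R}).
Hypotheses (size_P : forall k, size (P k) = k.+1) (monic_P : forall k, P k \is monic).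

Lemma triangular_coef_eq0 (c : nat -> R) m :
  \sum_(k < m) (c k)%:P * P k = 0 -> forall k, (k < m)%N -> c k = 0.
Proof.
elim: m => [|m IHm] sum0 k //.
have cm0 : c m = 0.
  have := congr1 (fun p : {poly R} => p`_m) sum0.
  have lead_Pm : (P m)`_m = 1 by have := monicP (monic_P m); rewrite /lead_coef size_P.
  rewrite big_ord_recr /= coef0 coefD coefCM lead_Pm mulr1 coef_sum big1 ?add0r // => i _.
  by rewrite coefCM nth_default ?mulr0 // size_P.
move: sum0; rewrite big_ord_recr /= cm0 mul0r addr0 => sum0.
by rewrite ltnS leq_eqVlt => /predU1P[-> | /(IHm sum0)].
Qed.

Lemma triangular_coef_eq (c d : nat -> R) m :
  \sum_(k < m) (c k)%:P * P k = \sum_(k < m) (d k)%:P * P k ->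
  forall k, (k < m)%N -> c k = d k.
Proof.
move=> /eqP; rewrite -subr_eq0 -sumrB => /eqP sum0 k ltkm; apply/eqP.
rewrite -subr_eq0; apply/eqP.
apply: (@triangular_coef_eq0 (fun k => c k - d k) _ _ _ ltkm).
by rewrite -[RHS]sum0; apply: eq_bigr => i _; rewrite polyCB mulrBl.
Qed.

End TriangularBasis.

Lemma size_ffall k : size (ffall k) = k.+1.
Proof.
rewrite /ffall -big_filter size_prod_XsubC size_filter count_predT.
by rewrite [index_enum _]unlock -enumT -cardT card_ord.
Qed.

Lemma ffall_monic k : ffall k \is monic.
Proof. exact: monic_prod_XsubC. Qed.

Lemma mulX_ffall k : 'X * ffall k = ffall k.+1 + (Fib k)%:P * ffall k.
Proof. by rewrite /ffall big_ord_recr /= mulrBr mulrC [_ * _%:P]mulrC subrK. Qed.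

Lemma mulX_ffall_sum (c : nat -> PQ) m : c m = 0 ->
  'X * \sum_(k < m) (c k)%:P * ffall k =
  \sum_(k < m.+1) ((if k : nat is j.+1 then c j else 0) + Fib k * c k)%:P * ffall k.
Proof.
move=> cm0; rewrite mulr_sumr.
under eq_bigr do rewrite mulrCA mulX_ffall mulrDr mulrA -polyCM [_ * Fib _]mulrC.
under [RHS]eq_bigr do rewrite polyCD mulrDl.
rewrite !big_split /= big_ord_recl /= polyC0 mul0r add0r.
by rewrite [X in _ = _ + X]big_ord_recr /= cm0 mulr0 polyC0 mul0r addr0.
Qed.

Lemma coef1M (R : nzRingType) (p q : {poly R}) : (p * q)`_1 = p`_0 * q`_1 + p`_1 * q`_0.
Proof. by rewrite coefM !big_ord_recr big_ord0 /= add0r. Qed.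

Definition Fib_q1 m : {poly int} := (Fib m).[1].

Lemma Fib_q1_rec m : Fib_q1 m.+2 = Fib_q1 m.+1 + 'X * Fib_q1 m.
Proof.
rewrite /Fib_q1 /Fib /=; case: (Fpair m) => a b /=.
by rewrite hornerD !hornerM /qvar /pvar hornerX hornerC mul1r.
Qed.

Lemma Fib_q1_coef m : (Fib_q1 m)`_0 = (0 < m)%:R /\ (Fib_q1 m)`_1 = m.-2%:R.
Proof.
suff [] : ((Fib_q1 m)`_0 = (0 < m)%:R /\ (Fib_q1 m)`_1 = m.-2%:R) /\
          ((Fib_q1 m.+1)`_0 = 1 /\ (Fib_q1 m.+1)`_1 = m.-1%:R) by [].
elim: m => [|m [[Fm0 _] [Fm'0 Fm'1]]].
  by rewrite /Fib_q1 /= /qvar hornerX horner0 !coef0 coefC coef1.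
split=> //; rewrite Fib_q1_rec !coefD !coefXM /= Fm'0 Fm'1 Fm0 addr0; split=> //.
by case: m {Fm0 Fm'0 Fm'1} => [|m] /=; rewrite ?addr0 // -natrD addn1.
Qed.

Section Expansion.
Variable Sf : nat -> nat -> PQ.
Hypothesis expX_Sf :
  forall n : nat, ('X ^+ n : {poly PQ}) = \sum_(k < n.+1) (Sf n k)%:P * ffall k.

(* [Sf] extended by [0] above the diagonal, where the hypothesis says nothing. *)
Definition Sfz n k := if (k <= n)%N then Sf n k else 0.

Lemma Sfz_out n k : (n < k)%N -> Sfz n k = 0.
Proof. by move=> ltnk; rewrite /Sfz leqNgt ltnk. Qed.

Lemma expX_Sfz n : ('X ^+ n : {poly PQ}) = \sum_(k < n.+1) (Sfz n k)%:P * ffall k.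
Proof. by rewrite expX_Sf; apply: eq_bigr => i _; rewrite /Sfz -ltnS ltn_ord. Qed.

Lemma Sfz_rec n k : Sfz n.+1 k = (if k is j.+1 then Sfz n j else 0) + Fib k * Sfz n k.
Proof.
have [ltkn | lenk] := ltnP k n.+2.
  pose succ_coef k := (if k is j.+1 then Sfz n j else 0) + Fib k * Sfz n k.
  apply: (triangular_coef_eq size_ffall ffall_monic (d := succ_coef) _ ltkn).
  by rewrite -expX_Sfz exprS expX_Sfz mulX_ffall_sum // Sfz_out.
rewrite !Sfz_out ?mulr0 ?addr0 //; last exact: leq_trans lenk.
by case: k lenk => // j lenj; rewrite Sfz_out.
Qed.

Lemma Sfz_q1_rec n k : (Sfz n.+1 k).[1] =
  (if k is j.+1 then (Sfz n j).[1] else 0) + Fib_q1 k * (Sfz n k).[1].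
Proof. by rewrite Sfz_rec hornerD hornerM; case: k => [|j] //; rewrite /Fib_q1 !horner0. Qed.

Lemma Sfz00 : Sfz 0 0 = 1.
Proof.
have := expX_Sf 0; rewrite expr0 big_ord1 /ffall big_ord0 mulr1 /Sfz /=.
by move=> /polyC_inj <-.
Qed.

Definition Sf_p0 n k := ((Sfz n k).[1])`_0.
Definition Sf_p1 n k := ((Sfz n k).[1])`_1.

Lemma Sf_p0_row0 k : Sf_p0 0 k = (k == 0%N)%:R.
Proof. by case: k => [|k]; rewrite /Sf_p0 ?Sfz00 ?Sfz_out ?horner0 ?hornerC ?coef1 ?coef0. Qed.

Lemma Sf_p1_row0 k : Sf_p1 0 k = 0.
Proof. by case: k => [|k]; rewrite /Sf_p1 ?Sfz00 ?Sfz_out ?horner0 ?hornerC ?coef1 ?coef0. Qed.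

Lemma Sf_p0_col0 n : Sf_p0 n.+1 0 = 0.
Proof. by rewrite /Sf_p0 Sfz_q1_rec add0r coef0M /Fib_q1 horner0 coef0 mul0r. Qed.

Lemma Sf_p1_col0 n : Sf_p1 n.+1 0 = 0.
Proof. by rewrite /Sf_p1 Sfz_q1_rec add0r coef1M /Fib_q1 horner0 !coef0 !mul0r addr0. Qed.

Lemma Sf_p0_rec n j : Sf_p0 n.+1 j.+1 = Sf_p0 n j + Sf_p0 n j.+1.
Proof. by rewrite /Sf_p0 Sfz_q1_rec coefD coef0M (Fib_q1_coef j.+1).1 mul1r. Qed.

Lemma Sf_p1_rec n j :
  Sf_p1 n.+1 j.+1 = Sf_p1 n j + Sf_p1 n j.+1 + j.-1%:R * Sf_p0 n j.+1.
Proof.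
rewrite /Sf_p1 /Sf_p0 Sfz_q1_rec coefD coef1M.
by have [-> ->] := Fib_q1_coef j.+1; rewrite mul1r addrA.
Qed.

Lemma Sf_p0E n k : Sf_p0 n.+1 k = (if k is j.+1 then 'C(n, j) else 0)%:R.
Proof.
elim: n k => [|n IHn] [|j]; rewrite ?Sf_p0_col0 // Sf_p0_rec.
  by rewrite !Sf_p0_row0 addr0 bin0n.
rewrite !IHn; case: j => [|j]; first by rewrite add0r bin0.
by rewrite -natrD binS addnC.
Qed.

Lemma Sf_p1E n k : Sf_p1 n.+1 k = ('C(k.-1, 2) * 'C(n, k))%:R.
Proof.
elim: n k => [|n IHn] [|j]; rewrite ?Sf_p1_col0 ?muln0 // Sf_p1_rec.
  by rewrite !Sf_p1_row0 Sf_p0_row0 mulr0 !addr0.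
rewrite !IHn Sf_p0E -!natrM -!natrD; congr (_%:R).
(* The [p]-coefficient [j-1] of [F_(j+1)] at [q = 1] joins [binom(j-1,2)] into [binom(j,2)]. *)
have binS2 : ('C(j.-1, 2) + j.-1 = 'C(j, 2))%N.
  by case: j {IHn} => [|j] //=; rewrite binS bin1 addnC.
by rewrite /= binS -binS2; ring.
Qed.

End Expansion.

Theorem theorem12 (Sf : nat -> nat -> PQ) :
  (forall n : nat, ('X ^+ n : {poly PQ}) = \sum_(k < n.+1) (Sf n k)%:P * ffall k) ->
  forall n k : nat, (3 <= k)%N -> (k <= n)%N ->
    ((Sf n k).[1])`_1 = ('C(k.-1, 2) * 'C(n.-1, k))%:R.
Proof.
move=> expX_Sf [|n] k le3k lekn; first by case: k le3k lekn.
by have := Sf_p1E expX_Sf n k; rewrite /Sf_p1 /Sfz lekn.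
Qed.
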